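(* For infinitely many $n$ there exist positive integers $b_1,\dots,b_n$ (each at most $n-1$) such that $(b_1,\dots,b_n)$-BG has an equilibrium graph in the MAX version with diameter $\sqrt{\log n}$.
   Context: Bounded budget network creation game $(b_1,\dots,b_n)$-BG: $n$ players with integer budgets $0\le b_i\le n-1$. A strategy of player $i$ is a set $S_i\subseteq\{1,\dots,n\}\setminus\{i\}$ with $|S_i|=b_i$; a profile is realized by the directed graph $G$ on $u_1,\dots,u_n$ with an arc $\overrightarrow{u_iu_j}$ iff $j\in S_i$. $U(G)$ is the undirected multigraph obtained by ignoring directions; $\operatorname{dist}(u,v)$ is the distance in $U(G)$, defined as $n^2$ between different components. MAX cost: $c_{MAX}(u)=\max_v\operatorname{dist}(u,v)+(\kappa-1)n^2$, $\kappa$ the number of components of $U(G)$. An equilibrium graph in the MAX version is a realization in which no vertex can decrease its MAX cost by changing its own strategy while the others are fixed. The diameter is the maximum distance between two vertices. Logarithms are base 2. *)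

From Stdlib Require Import Reals.
From mathcomp Require Import all_boot.

Set Implicit Arguments.
Unset Strict Implicit.
Unset Printing Implicit Defensive.

(* A strategy profile: player i buys arcs to the players in S i. *)
Definition profile (n : nat) := 'I_n -> {set 'I_n}.

Definition valid_strategy (n : nat) (b : 'I_n -> nat) (i : 'I_n) (A : {set 'I_n}) :=
  i \notin A /\ #|A| = b i.

Definition valid_profile (n : nat) (b : 'I_n -> nat) (S : profile n) :=
  forall i, valid_strategy b i (S i).

Definition adj (n : nat) (S : profile n) : rel 'I_n :=
  fun u v => (v \in S u) || (u \in S v).

Fixpoint ball (n : nat) (S : profile n) (k : nat) (u : 'I_n) : {set 'I_n} :=
  match k with
  | 0 => [set u]
  | k'.+1 => ball S k' u :|: [set v | [exists w in ball S k' u, adj S w v]]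
  end.

(* distance in U(G): least k with v within k steps (any finite distance is < n),
   and n^2 between different components *)
Definition dist (n : nat) (S : profile n) (u v : 'I_n) : nat :=
  \big[minn/n ^ 2]_(k < n | v \in ball S k u) k.

Definition ncomp (n : nat) (S : profile n) : nat :=
  #|[set [set v | connect (adj S) u v] | u : 'I_n]|.

Definition cMAX (n : nat) (S : profile n) (u : 'I_n) : nat :=
  \max_(v : 'I_n) dist S u v + (ncomp S - 1) * n ^ 2.

Definition max_equilibrium (n : nat) (b : 'I_n -> nat) (S : profile n) :=
  valid_profile b S /\
  forall (i : 'I_n) (S' : profile n),
    (forall j, j != i -> S' j = S j) ->
    valid_strategy b i (S' i) ->
    cMAX S i <= cMAX S' i.

Definition diameter (n : nat) (S : profile n) : nat :=
  \max_(u : 'I_n) \max_(v : 'I_n) dist S u v.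

Definition log2 (x : R) : R := Rdiv (ln x) (ln (IZR 2)).

From Pilot Require Import Defs.
From Stdlib Require Import Reals Lra.
From mathcomp Require Import all_boot zify.

Set Implicit Arguments.
Unset Strict Implicit.
Unset Printing Implicit Defensive.

(* Take n = k^d with k = 2^d, and let every vertex x buy the arcs of the
   de Bruijn graph, x -> x k + a (mod n) for a < k.  Every vertex reaches
   every other one along d arcs, so the diameter is d = sqrt (log2 n).
   After any deviation of one player the graph still has maximum degree at
   most 2k + 1 (out-degree <= k, in-degree <= k + 1), so a ball of radius
   d - 1 has at most (2k + 2)^(d-1) < k^d = n vertices: every vertex keeps
   eccentricity at least d, and no deviation pays off. *)

Lemma card_notin_le n (x : 'I_n) (A : {set 'I_n}) : x \notin A -> #|A| <= n - 1.
Proof.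
move=> xA; rewrite -[n in n - 1]card_ord subn1 -(cardsC1 x) subset_leq_card //.
by apply/subsetP => y yA; rewrite in_setC1; apply: contraNneq xA => <-.
Qed.

Section Balls.
Variables (n : nat) (S : profile n).

Lemma ball_subset r r' u : r <= r' -> ball S r u \subset ball S r' u.
Proof.
move=> /subnK <-; elim: (r' - r) => [|m IH]; first by rewrite add0n.
by rewrite addSn (subset_trans IH) //= subsetUl.
Qed.

Lemma connect_ball r u v : v \in ball S r u -> connect (adj S) u v.
Proof.
elim: r v => [|r IH] v /=; first by rewrite in_set1 => /eqP ->.
rewrite in_setU in_set => /orP [/IH //| /existsP [w /andP [wB uv]]].
exact: connect_trans (IH _ wB) (connect1 uv).
Qed.

Lemma ball_adj r u x y : x \in ball S r u -> adj S x y -> y \in ball S r.+1 u.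
Proof.
move=> xB xy; rewrite /= in_setU in_set; apply/orP; right.
by apply/existsP; exists x; rewrite xB.
Qed.

Lemma dist_le_ball r u v : r < n -> v \in ball S r u -> Defs.dist S u v <= r.
Proof.
move=> rn vr; rewrite /Defs.dist.
have minE (s : seq 'I_n) m : Ordinal rn \in s ->
    \big[minn/m]_(i <- s | v \in ball S i u) nat_of_ord i <= r.
  elim: s => [|x s IH] //; rewrite in_cons big_cons => /orP [/eqP <-|xs].
    by rewrite vr geq_minl.
  by case: ifP => _; rewrite ?geq_min IH ?orbT.
by apply: minE; rewrite mem_index_enum.
Qed.

Lemma dist_gt_ball r u v : r < n ^ 2 -> v \notin ball S r u -> r < Defs.dist S u v.
Proof.
move=> rn vr; rewrite /Defs.dist.
apply: (big_ind (fun x => r < x)) => // [x y|i vi]; first by rewrite leq_min => ->.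
rewrite ltnNge; apply: contra vr => ir.
exact: subsetP (ball_subset u ir) v vi.
Qed.

Lemma exists_dist_gt r u : r < n ^ 2 -> #|ball S r u| < n -> exists v, r < Defs.dist S u v.
Proof.
move=> rn small; have [v vr] : exists v, v \notin ball S r u.
  apply/existsP; rewrite -negb_forall; apply: contraL small => /forallP inB.
  by rewrite -leqNgt -{1}(card_ord n) -cardsT subset_leq_card //; apply/subsetP.
by exists v; apply: dist_gt_ball.
Qed.

Lemma card_adj_le w :
  #|[set v | adj S w v]| <= #|S w| + #|[set v | w \in S v]|.
Proof.
have -> : [set v | adj S w v] = S w :|: [set v | w \in S v].
  by apply/setP => v; rewrite !inE.
exact: (leq_card_setU _ _).1.
Qed.

Lemma card_ball_le D :
  (forall w, #|[set v | adj S w v]| <= D) -> forall r u, #|ball S r u| <= D.+1 ^ r.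
Proof.
move=> degD; elim=> [|r IH] u /=; first by rewrite cards1.
set B := ball S r u.
have NB : #|[set v | [exists w in B, adj S w v]]| <= #|B| * D.
  have -> : [set v | [exists w in B, adj S w v]] = \bigcup_(w in B) [set v | adj S w v].
    apply/setP => v; rewrite inE; apply/existsP/bigcupP.
      by case=> w /andP [wB wv]; exists w; rewrite ?inE.
    by case=> w wB; rewrite inE => wv; exists w; rewrite wB.
  rewrite -sum_nat_const (@leq_trans (\sum_(w in B) #|[set v | adj S w v]|)) ?leq_sum //.
  apply: (big_ind2 (fun (X : {set 'I_n}) m => #|X| <= m)) => [|X1 m1 X2 m2 h1 h2|//].
    by rewrite cards0.
  by rewrite (leq_trans (leq_card_setU X1 X2).1) // leq_add.
rewrite (leq_trans (leq_card_setU _ _).1) // expnS.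
rewrite (leq_trans (leq_add (leqnn _) NB)) // -[X in X + _]muln1 -mulnDr add1n.
by rewrite mulnC leq_mul2l IH orbT.
Qed.

Lemma cMAX_le_connected u r :
  ncomp S <= 1 -> (forall v, Defs.dist S u v <= r) -> cMAX S u <= r.
Proof.
move=> conn distr; rewrite /cMAX.
have -> : ncomp S - 1 = 0 by apply/eqP; rewrite subn_eq0.
by rewrite mul0n addn0; apply/bigmax_leqP.
Qed.

Lemma dist_le_cMAX u v : Defs.dist S u v <= cMAX S u.
Proof. exact: leq_trans (leq_bigmax v) (leq_addr _ _). Qed.

Lemma ncomp_le1 : (forall u v, connect (adj S) u v) -> ncomp S <= 1.
Proof.
move=> conn; rewrite /ncomp -(cards1 [set: 'I_n]) subset_leq_card //.
apply/subsetP => X /imsetP [u _ ->]; rewrite in_set1.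
by apply/eqP/setP => v; rewrite !inE conn.
Qed.

End Balls.

(* The out-neighbourhood of x in the base-k de Bruijn graph on Z/nZ, with
   the self-loop removed since a player cannot buy an arc to itself. *)
Definition debruijn (n k : nat) (x : 'I_n) : {set 'I_n} :=
  [set y : 'I_n | [exists a : 'I_k, val y == (x * k + a) %% n] & y != x].

Section DeBruijn.
Variables k d : nat.
Hypotheses (k_gt1 : 1 < k) (d_gt0 : 0 < d).

Local Notation n := (k ^ d).
Local Notation K := (k ^ d.-1).
Local Notation DB := (fun x : 'I_n => debruijn k x).

Lemma n_gt1 : 1 < n.
Proof. by rewrite -(exp1n d) ltn_exp2r -?lt0n. Qed.

Lemma n_gt0 : 0 < n.
Proof. exact: ltnW n_gt1. Qed.

Lemma d_lt_n : d < n.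
Proof. exact: ltn_expl. Qed.

Lemma nE : n = K * k.
Proof. by rewrite -expnSr prednK. Qed.

Lemma debruijn_notin (x : 'I_n) : x \notin debruijn k x.
Proof. by rewrite inE eqxx andbF. Qed.

Lemma card_debruijn_le (x : 'I_n) : #|debruijn k x| <= k.
Proof.
pose g (a : 'I_k) : 'I_n := Ordinal (ltn_pmod (x * k + a) n_gt0).
rewrite -[X in _ <= X]card_ord (leq_trans _ (leq_imset_card g _)) // subset_leq_card //.
apply/subsetP => y; rewrite inE => /andP [/existsP [a /eqP ya] _].
by apply/imsetP; exists a => //; apply: val_inj.
Qed.

Lemma card_debruijn_gt0 (x : 'I_n) : 0 < #|debruijn k x|.
Proof.
pose y (a : nat) : 'I_n := Ordinal (ltn_pmod (x * k + a) n_gt0).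
have yDB (a : 'I_k) : y a != x -> y a \in debruijn k x.
  by move=> yx; rewrite inE yx andbT; apply/existsP; exists a.
have y01 : y 0 != y 1.
  apply/eqP => /(congr1 val) /= /eqP; rewrite eqn_modDl.
  by rewrite mod0n modn_small ?n_gt1.
apply/card_gt0P; have [y0x|y0x] := eqVneq (y 0) x.
- by exists (y 1); apply: (yDB (Ordinal k_gt1)); rewrite -y0x eq_sym.
- by exists (y 0); apply: (yDB (Ordinal (ltnW k_gt1))).
Qed.

(* Every arc x -> y of the de Bruijn graph determines the top digit of x
   as the quotient y / k; hence in-degrees are at most k as well. *)
Lemma debruijn_divE (x y : 'I_n) : y \in debruijn k x -> y %/ k = x %% K.
Proof.
rewrite inE => /andP [/existsP [a /eqP ->] _].
have K_gt0 : 0 < K by rewrite expn_gt0 ltnW.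
move: (nat_of_ord x) (nat_of_ord a) (ltn_ord a) => {}x {}a ak.
rewrite nE {1}(divn_eq x K) mulnDl -mulnA -addnA modnMDl modn_small.
  by rewrite divnMDl ?divn_small ?addn0 // ltnW.
rewrite (leq_trans (_ : _ < (x %% K).+1 * k)) ?leq_mul2r ?ltn_pmod ?orbT //.
by rewrite mulSn addnC ltn_add2r.
Qed.

Lemma card_debruijn_in_le (y : 'I_n) : #|[set x | y \in debruijn k x]| <= k.
Proof.
have top_lt (x : 'I_n) : x %/ K < k.
  by rewrite ltn_divLR ?expn_gt0 ?(ltnW k_gt1) // mulnC -nE.
pose top (x : 'I_n) : 'I_k := Ordinal (top_lt x).
rewrite -(card_in_imset (f := top)); first by rewrite -[X in _ <= X]card_ord max_card.
move=> x1 x2; rewrite in_set => y1; rewrite in_set => y2 /(congr1 val) /= tE.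
apply: val_inj; rewrite /= (divn_eq x1 K) (divn_eq x2 K) tE.
by rewrite -(debruijn_divE y1) -(debruijn_divE y2).
Qed.

Lemma debruijn_shift (x y : 'I_n) (a : nat) :
  a < k -> val y = (x * k + a) %% n -> y != x -> y \in debruijn k x.
Proof.
move=> ak yE yx; rewrite inE yx andbT; apply/existsP.
by exists (Ordinal ak); rewrite yE.
Qed.

(* The j-th vertex on the path from u to y is the base-k number formed by
   the last d - j digits of u followed by the first j digits of y. *)
Lemma debruijn_ball_diam (u y : 'I_n) : y \in ball DB d u.
Proof.
pose w j : 'I_n := Ordinal (ltn_pmod (u * k ^ j + y %/ k ^ (d - j)) n_gt0).
have wS j : j < d -> val (w j.+1) = (w j * k + y %/ k ^ (d - j.+1) %% k) %% n.
  move=> jd; rewrite /= -[RHS]modnDml modnMml modnDml; congr (_ %% n).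
  have -> : d - j = (d - j.+1).+1 by lia.
  set z := y %/ k ^ (d - j.+1).
  rewrite [k ^ (d - j.+1).+1]expnSr divnMA -/z {1}(divn_eq z k) expnSr.
  lia.
have wB j : j <= d -> w j \in ball DB j u.
  elim: j => [_|j IH jd].
    suff -> : w 0 = u by rewrite /= in_set1.
    by apply: val_inj; rewrite /= subn0 divn_small // expn0 muln1 addn0 modn_small.
  have {IH}wjB := IH (ltnW jd).
  have [->|wj] := eqVneq (w j.+1) (w j).
    exact: subsetP (ball_subset _ _ (leqnSn j)) _ wjB.
  apply: ball_adj wjB _; apply/orP; left.
  by apply: debruijn_shift (wS j jd) wj; rewrite ltn_pmod // ltnW.
suff -> : y = w d by exact: wB.
by apply: val_inj; rewrite /= subnn expn0 divn1 modnMDl modn_small.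
Qed.

Lemma debruijn_dist_le (u v : 'I_n) : Defs.dist DB u v <= d.
Proof. exact: dist_le_ball d_lt_n (debruijn_ball_diam u v). Qed.

Lemma debruijn_ncomp : ncomp DB <= 1.
Proof. by apply: ncomp_le1 => u v; apply: connect_ball (debruijn_ball_diam u v). Qed.

Lemma card_adj_deviation (S : profile n) (i : 'I_n) :
    (forall x, x != i -> S x = debruijn k x) -> #|S i| <= k ->
  forall w, #|[set v | adj S w v]| <= (2 * k).+1.
Proof.
move=> Si Sik w; rewrite (leq_trans (card_adj_le S w)) // mul2n -addnn -addnS.
rewrite leq_add //; first by have [->|/Si ->] := eqVneq w i; rewrite ?card_debruijn_le.
apply: (@leq_trans #|i |: [set x | w \in debruijn k x]|).
  apply/subset_leq_card/subsetP => x; rewrite in_set => wx; rewrite in_setU1.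
  by have [//|/Si Sx] := eqVneq x i; rewrite in_set -Sx.
by rewrite cardsU1 addnC -addn1 leq_add ?leq_b1 ?card_debruijn_in_le.
Qed.

Lemma deviation_ecc_ge (S : profile n) (i : 'I_n) : (2 * k).+2 ^ d.-1 < n ->
    (forall x, x != i -> S x = debruijn k x) -> #|S i| <= k ->
  exists v, d <= Defs.dist S i v.
Proof.
move=> small Si Sik; have [v dv] : exists v, d.-1 < Defs.dist S i v.
  apply: exists_dist_gt; last first.
    exact: leq_ltn_trans (card_ball_le (card_adj_deviation Si Sik) _ _) small.
  apply: leq_trans (leq_ltn_trans (leq_pred d) d_lt_n) _.
  by rewrite -{1}(expn1 n) leq_pexp2l ?n_gt0.
by exists v; rewrite prednK in dv.
Qed.

Lemma debruijn_max_equilibrium :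
  (2 * k).+2 ^ d.-1 < n -> max_equilibrium (fun x => #|debruijn k x|) DB.
Proof.
move=> small; split; first by move=> x; split=> //; apply: debruijn_notin.
move=> i S Si [_ Sik]; have Sik' : #|S i| <= k by rewrite Sik card_debruijn_le.
have [v dv] := deviation_ecc_ge small Si Sik'.
have cMAX_DB := cMAX_le_connected debruijn_ncomp (debruijn_dist_le i).
exact: leq_trans cMAX_DB (leq_trans dv (dist_le_cMAX S i v)).
Qed.

Lemma debruijn_diameter : (2 * k).+2 ^ d.-1 < n -> diameter DB = d.
Proof.
move=> small; apply/eqP; rewrite eqn_leq; apply/andP; split.
  by apply/bigmax_leqP => u _; apply/bigmax_leqP => v _; apply: debruijn_dist_le.
pose u0 : 'I_n := Ordinal n_gt0.
have [v dv] := deviation_ecc_ge small (fun _ _ => erefl) (card_debruijn_le u0).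
exact: leq_trans dv (leq_trans (leq_bigmax v) (leq_bigmax u0)).
Qed.

End DeBruijn.

Lemma pow_succ_mul_le a m : m <= a -> (a + 1) ^ m * (a - m) <= a ^ m.+1.
Proof.
elim: m => [|m IH] ma; first by rewrite expn0 mul1n subn0 expn1.
have step : (a + 1) * (a - m.+1) <= a * (a - m) by nia.
apply: (@leq_trans ((a + 1) ^ m * (a * (a - m)))).
  by rewrite expnS mulnAC mulnC leq_mul2l step orbT.
by rewrite mulnCA [a ^ m.+2]expnS leq_mul2l IH ?orbT // ltnW.
Qed.

Lemma pow_succ_lt_double a m : 2 * m < a -> (a + 1) ^ m < 2 * a ^ m.
Proof.
move=> ma; have ma' : m <= a by lia.
rewrite -(ltn_pmul2r (_ : 0 < a - m)); last by lia.
apply: leq_ltn_trans (pow_succ_mul_le ma') _.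
have : 0 < a ^ m by rewrite expn_gt0; lia.
rewrite expnS; move: (a ^ m) => am; nia.
Qed.

(* For k = 2^d: (2k + 2)^(d-1) = 2^(d-1) (k + 1)^(d-1) < 2^d k^(d-1) = k^d. *)
Lemma ball_size_lt e : (2 * 2 ^ e.+1).+2 ^ e < (2 ^ e.+1) ^ e.+1.
Proof.
have small : 2 * e < 2 ^ e.+1 by rewrite expnS ltn_pmul2l // ltn_expl.
have -> : (2 * 2 ^ e.+1).+2 = 2 * (2 ^ e.+1 + 1) by rewrite mulnDr muln1 addn2.
rewrite expnMn.
apply: (@leq_trans (2 ^ e * (2 * (2 ^ e.+1) ^ e))).
  by rewrite ltn_pmul2l ?expn_gt0 ?pow_succ_lt_double.
by rewrite mulnA -expnSr mulnC -expnSr.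
Qed.

Lemma sqrt_log2_pow2 d : sqrt (log2 (INR ((2 ^ d) ^ d)%N)) = INR d.
Proof.
have INR_pow2 m : INR (2 ^ m) = pow (IZR 2) m.
  by elim: m => [|m IH] //; rewrite expnS mult_INR IH (INR_IZR_INZ 2).
rewrite -expnM INR_pow2 /log2 ln_pow; last by lra.
have ln2_neq0 : ln (IZR 2) <> R0 by apply: ln_neq_0; lra.
rewrite mult_INR /Rdiv Rmult_assoc Rinv_r // Rmult_1_r sqrt_square //.
exact: pos_INR.
Qed.

Theorem mainTheorem8 :
  forall N : nat, exists n : nat, (N <= n)%N /\
    exists (b : 'I_n -> nat),
      (forall i, (0 < b i)%N && (b i <= n - 1)%N) /\
      exists S : profile n,
        max_equilibrium b S /\
        INR (diameter S) = sqrt (log2 (INR n)).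
Proof.
move=> N; pose d := N.+1; pose k := 2 ^ d.
have k_gt1 : 1 < k by apply: leq_ltn_trans (ltn_expl d (isT : 1 < 2)).
have d_gt0 : 0 < d by [].
have small : (2 * k).+2 ^ d.-1 < k ^ d by apply: ball_size_lt.
exists (k ^ d); split; first exact: leq_trans (leqnSn N) (ltnW (d_lt_n d k_gt1)).
exists (fun x => #|debruijn k x|); split.
  by move=> x; rewrite card_debruijn_gt0 // (card_notin_le (debruijn_notin x)).
exists (fun x => debruijn k x); split; first exact: debruijn_max_equilibrium.
by rewrite debruijn_diameter // sqrt_log2_pow2.
Qed.
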